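(* Let $N\to\infty$, let $h=h(N)$ satisfy $h\to\infty$ and $h=o(N)$, and let $Q=Q(N)\to\infty$ with $Q\ll N$. Let $g:\mathbb{N}\to\mathbb{R}$ satisfy, for every $\varepsilon>0$, $g(q)\ll_{\varepsilon}N^{\varepsilon}$ for all $q\le Q$. Let $f:\mathbb{N}\cup\{0\}\to\mathbb{R}$ and $S_f(\alpha)=\Re\sum_{0\le n\le N}f(n)e(n\alpha)$. If $S_f(\alpha)\ge0$ for all $\alpha\in[0,1]$, then $$\sum_{q\le Q}\frac{g(q)}{q}\sum_{j\,(\mathrm{mod}\,q)}\widehat{W}\Big(\frac jq\Big)S_f\Big(-\frac jq\Big)\lll\sum_{q\le Q}\frac1q\sum_{j\,(\mathrm{mod}\,q)}\widehat{W}\Big(\frac jq\Big)S_f\Big(-\frac jq\Big).$$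
   Context: $e(x)=e^{2\pi i x}$. For integers $a\in[-2h,2h]$, $W(a)=\max(2h-3|a|,\,|a|-2h)$, and $W(a)=0$ otherwise. Its discrete Fourier transform is $\widehat{W}(\beta)=\sum_a W(a)e(a\beta)$ for $\beta\in\mathbb{R}$. The inner sums run over a complete residue system modulo $q$. The notation $A\lll B$ means: for every $\varepsilon>0$, $A\ll_{\varepsilon}N^{\varepsilon}B$. *)

From Stdlib Require Import Reals Lra Lia ZArith Arith List.
Open Scope R_scope.

Definition lsum (s : list nat) (F : nat -> R) : R :=
  fold_right Rplus 0 (map F s).

Definition Wfun (h : R) (a : Z) : R :=
  if Rle_dec (Rabs (IZR a)) (2 * h)
  then Rmax (2 * h - 3 * Rabs (IZR a)) (Rabs (IZR a) - 2 * h)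
  else 0.

(* Bound K with every integer a in [-2h,2h] satisfying |a| <= K. *)
Definition Wbound (h : R) : nat := Z.abs_nat (up (2 * h)).

(* Fourier transform What(beta) = sum_a W(a) e(a beta).  Since W(-a) = W(a),
   this equals sum_a W(a) cos(2 pi a beta) (a real number). *)
Definition What (h : R) (beta : R) : R :=
  let K := Wbound h in
  lsum (seq 0 (2 * K + 1))
    (fun k => let a := (Z.of_nat k - Z.of_nat K)%Z in
              Wfun h a * cos (2 * PI * IZR a * beta)).

(* S_f(alpha) = Re sum_{0<=n<=N} f(n) e(n alpha) = sum f(n) cos(2 pi n alpha), f real. *)
Definition Sf (f : nat -> R) (N : nat) (alpha : R) : R :=
  sum_f_R0 (fun n => f n * cos (2 * PI * INR n * alpha)) N.

(* inner sum over a complete residue system j = 0, ..., q-1 *)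
Definition inner (h : R) (f : nat -> R) (N q : nat) : R :=
  lsum (seq 0 q) (fun j => What h (INR j / INR q) * Sf f N (- (INR j / INR q))).

Definition nbelow (Q : R) : nat := Z.to_nat (Int_part Q).

Definition Tsum (c : nat -> R) (h Q : R) (f : nat -> R) (N : nat) : R :=
  lsum (seq 1 (nbelow Q)) (fun q => c q / INR q * inner h f N q).

(* Since S_f(-j/q) = S_f(j/q) >= 0 by hypothesis, every inner sum is a sum of
   nonnegative terms once we know that the Fourier transform of W is nonnegative;
   then |g(q)| <<_eps N^eps can be pulled out termwise.

   Nonnegativity of W^: summation by parts gives
     (2 - 2 cos 2 pi beta) W^(beta) = sum_b (D2 W)(b) cos(2 pi b beta),
   with D2 the (negative) discrete second difference.  W depends linearly on 2h
   between consecutive integers, and for an integer m = 2h the sequence D2 W is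
   supported on the kinks 0, +-m/2, +-m of the piecewise linear profile of W.
   The resulting trigonometric polynomials are squares: 4 (1 - cos x)^2 for even
   m, and a sum of squares for odd m.  At beta = 0 the test function -b^2 plays
   the role of the cosine. *)

From Stdlib Require Import Reals Lra Lia ZArith List Psatz.
Open Scope R_scope.

Lemma lsum_cons x s F : lsum (x :: s) F = F x + lsum s F.
Proof. reflexivity. Qed.

Lemma lsum_app s1 s2 F : lsum (s1 ++ s2) F = lsum s1 F + lsum s2 F.
Proof.
  induction s1 as [|x s1 IH]; unfold lsum in *; simpl; [ring | rewrite IH; ring].
Qed.

Lemma lsum_ext s F G : (forall x, In x s -> F x = G x) -> lsum s F = lsum s G.
Proof.
  intros H. unfold lsum. f_equal. apply map_ext_in. exact H.
Qed.

Lemma lsum_lin s a b F G :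
  lsum s (fun x => a * F x + b * G x) = a * lsum s F + b * lsum s G.
Proof.
  induction s as [|x s IH]; [unfold lsum; simpl; ring | rewrite !lsum_cons, IH; ring].
Qed.

Lemma lsum_scal s c F : lsum s (fun x => c * F x) = c * lsum s F.
Proof.
  rewrite (lsum_ext _ _ (fun x => c * F x + 0 * F x)) by (intros; ring).
  rewrite lsum_lin. ring.
Qed.

Lemma lsum_le s F G : (forall x, In x s -> F x <= G x) -> lsum s F <= lsum s G.
Proof.
  induction s as [|x s IH]; intros H; [unfold lsum; simpl; lra|].
  rewrite !lsum_cons. apply Rplus_le_compat.
  - apply H. now left.
  - apply IH. intros y Hy. apply H. now right.
Qed.

Lemma lsum_nonneg s F : (forall x, In x s -> 0 <= F x) -> 0 <= lsum s F.
Proof.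
  intros H. replace 0 with (lsum s (fun _ => 0)).
  - now apply lsum_le.
  - clear H. induction s as [|x s IH]; [reflexivity | rewrite lsum_cons, IH; ring].
Qed.

Lemma lsum_abs s F : Rabs (lsum s F) <= lsum s (fun x => Rabs (F x)).
Proof.
  induction s as [|x s IH]; [unfold lsum; simpl; rewrite Rabs_R0; lra|].
  rewrite !lsum_cons. eapply Rle_trans; [apply Rabs_triang | lra].
Qed.

Lemma lsum_seq_shift a n F : lsum (seq (S a) n) F = lsum (seq a n) (fun k => F (S k)).
Proof. rewrite <- seq_shift. unfold lsum. now rewrite map_map. Qed.

Lemma lsum_seq_delta n j x : (j < n)%nat ->
  lsum (seq 0 n) (fun k => if Nat.eq_dec k j then x else 0) = x.
Proof.
  induction n as [|n IH]; intros Hj; [lia|].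
  rewrite seq_S, lsum_app. simpl plus. rewrite lsum_cons.
  destruct (Nat.eq_dec n j) as [->|Hne].
  - rewrite (lsum_ext _ _ (fun _ => 0 * x)), lsum_scal; [unfold lsum; simpl; ring|].
    intros k Hk. apply in_seq in Hk. destruct (Nat.eq_dec k j); [lia | ring].
  - rewrite IH by lia. unfold lsum; simpl; ring.
Qed.

Definition zsum (K : nat) (F : Z -> R) : R :=
  lsum (seq 0 (2 * K + 1)) (fun k => F (Z.of_nat k - Z.of_nat K)%Z).

Lemma zsum_ext K F G : (forall b, F b = G b) -> zsum K F = zsum K G.
Proof. intros H. apply lsum_ext. intros; apply H. Qed.

Lemma zsum_lin K a b F G :
  zsum K (fun x => a * F x + b * G x) = a * zsum K F + b * zsum K G.
Proof. apply lsum_lin. Qed.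

Lemma zsum_scal K c F : zsum K (fun b => c * F b) = c * zsum K F.
Proof. apply lsum_scal. Qed.

Lemma zsum_shift K F :
  zsum K (fun a => F (a + 1)%Z) = zsum K F - F (- Z.of_nat K)%Z + F (Z.of_nat K + 1)%Z.
Proof.
  unfold zsum. set (G := fun k => F (Z.of_nat k - Z.of_nat K)%Z).
  rewrite (lsum_ext _ _ (fun k => G (S k))) by (intros; unfold G; f_equal; lia).
  rewrite <- lsum_seq_shift.
  assert (Hsplit : lsum (seq 0 (S (2 * K + 1))) G = G 0%nat + lsum (seq 1 (2 * K + 1)) G)
    by reflexivity.
  rewrite seq_S, lsum_app, lsum_cons in Hsplit.
  replace (0 + (2 * K + 1))%nat with (2 * K + 1)%nat in Hsplit by lia.
  assert (G 0%nat = F (- Z.of_nat K)%Z) by (unfold G; f_equal; lia).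
  assert (G (2 * K + 1)%nat = F (Z.of_nat K + 1)%Z) by (unfold G; f_equal; lia).
  change (lsum nil G) with 0 in Hsplit. lra.
Qed.

Lemma zsum_shift_down K F :
  zsum K (fun a => F (a - 1)%Z) = zsum K F - F (Z.of_nat K) + F (- Z.of_nat K - 1)%Z.
Proof.
  pose proof (zsum_shift K (fun a => F (a - 1)%Z)) as H. cbv beta in H.
  rewrite (zsum_ext K (fun a => F (a + 1 - 1)%Z) F) in H by (intros; f_equal; lia).
  replace (Z.of_nat K + 1 - 1)%Z with (Z.of_nat K) in H by lia.
  lra.
Qed.

Definition zind (s b : Z) : Z := if Z.eq_dec b s then 1%Z else 0%Z.

Lemma zsum_zind K s phi : (- Z.of_nat K <= s <= Z.of_nat K)%Z ->
  zsum K (fun b => IZR (zind s b) * phi b) = phi s.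
Proof.
  intros Hs. unfold zsum.
  rewrite (lsum_ext _ _
    (fun k => if Nat.eq_dec k (Z.to_nat (s + Z.of_nat K)) then phi s else 0)).
  - apply lsum_seq_delta. lia.
  - intros k _. unfold zind.
    destruct (Z.eq_dec _ s) as [E|]; destruct (Nat.eq_dec _ _); try lia.
    + rewrite E. ring.
    + ring.
Qed.

(* The negative of the usual second difference, so that it is nonnegative at a
   convex kink. *)
Definition second_diff (F : Z -> R) (b : Z) : R := 2 * F b - F (b - 1)%Z - F (b + 1)%Z.

Lemma zsum_second_diff_by_parts K W phi :
  W (- Z.of_nat K - 1)%Z = 0 -> W (- Z.of_nat K)%Z = 0 ->
  W (Z.of_nat K) = 0 -> W (Z.of_nat K + 1)%Z = 0 ->
  zsum K (fun b => W b * second_diff phi b) = zsum K (fun b => second_diff W b * phi b).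
Proof.
  intros H1 H2 H3 H4. unfold second_diff.
  assert (Hup : zsum K (fun b => W b * phi (b + 1)%Z) = zsum K (fun b => W (b - 1)%Z * phi b)).
  { pose proof (zsum_shift K (fun c => W (c - 1)%Z * phi c)) as E. cbv beta in E.
    rewrite (zsum_ext K _ (fun b => W b * phi (b + 1)%Z)) in E
      by (intros; now rewrite Z.add_simpl_r).
    replace (Z.of_nat K + 1 - 1)%Z with (Z.of_nat K) in E by ring.
    rewrite H1, H3 in E. lra. }
  assert (Hdown : zsum K (fun b => W b * phi (b - 1)%Z) = zsum K (fun b => W (b + 1)%Z * phi b)).
  { pose proof (zsum_shift_down K (fun c => W (c + 1)%Z * phi c)) as E. cbv beta in E.
    rewrite (zsum_ext K _ (fun b => W b * phi (b - 1)%Z)) in E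
      by (intros; now rewrite Z.sub_simpl_r).
    replace (- Z.of_nat K - 1 + 1)%Z with (- Z.of_nat K)%Z in E by ring.
    rewrite H2, H4 in E. lra. }
  rewrite (zsum_ext K _ (fun b => 2 * (W b * phi b)
      + 1 * ((-1) * (W b * phi (b - 1)%Z) + (-1) * (W b * phi (b + 1)%Z)))) by (intros; ring).
  rewrite (zsum_ext K (fun b => (2 * W b - W (b - 1)%Z - W (b + 1)%Z) * phi b)
             (fun b => 2 * (W b * phi b)
                + 1 * ((-1) * (W (b + 1)%Z * phi b) + (-1) * (W (b - 1)%Z * phi b))))
    by (intros; ring).
  rewrite !zsum_lin, Hup, Hdown. ring.
Qed.

(** * The weight W for an integer value m of 2h *)

Definition Wz (m a : Z) : Z :=
  if (Z.abs a <=? m)%Z then Z.max (m - 3 * Z.abs a) (Z.abs a - m) else 0%Z.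

Lemma Wz_cases m a : (0 <= m)%Z -> Wz m a =
  if (Z.abs a <=? m)%Z then (if (2 * Z.abs a <=? m)%Z then m - 3 * Z.abs a else Z.abs a - m)%Z
  else 0%Z.
Proof.
  intros. unfold Wz. destruct (Z.leb_spec (Z.abs a) m); [|reflexivity].
  destruct (Z.leb_spec (2 * Z.abs a) m); lia.
Qed.

Definition Wz_second_diff (m b : Z) : Z := (2 * Wz m b - Wz m (b - 1) - Wz m (b + 1))%Z.

Definition kinks_even (k b : Z) : Z :=
  (6 * zind 0 b - 4 * zind k b - 4 * zind (- k) b + zind (2 * k) b + zind (- 2 * k) b)%Z.

Definition kinks_odd (k b : Z) : Z :=
  (6 * zind 0 b - 2 * zind k b - 2 * zind (- k) b - 2 * zind (k + 1) b - 2 * zind (- k - 1) b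
   + zind (2 * k + 1) b + zind (- 2 * k - 1) b)%Z.

Ltac Wz_case_analysis b :=
  destruct (Z.lt_trichotomy b 0) as [Hb|[Hb|Hb]];
  [ rewrite (Z.abs_neq b), (Z.abs_neq (b - 1)), (Z.abs_neq (b + 1)) by lia
  | subst b; simpl Z.abs
  | rewrite (Z.abs_eq b), (Z.abs_eq (b - 1)), (Z.abs_eq (b + 1)) by lia ];
  repeat match goal with |- context [Z.eq_dec ?x ?y] =>
    destruct (Z.eq_dec x y); [try subst x|]; try (exfalso; lia) end;
  repeat match goal with |- context [Z.leb ?x ?y] =>
    first [ rewrite (proj2 (Z.leb_le x y)) by lia
          | rewrite (proj2 (Z.leb_gt x y)) by lia
          | destruct (Z.leb_spec x y) ] end;
  lia.

Lemma Wz_second_diff_even k b : (0 <= k)%Z -> Wz_second_diff (2 * k) b = kinks_even k b.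
Proof.
  intros. unfold Wz_second_diff, kinks_even, zind. rewrite !Wz_cases by lia.
  Wz_case_analysis b.
Qed.

Lemma Wz_second_diff_odd k b : (0 <= k)%Z -> Wz_second_diff (2 * k + 1) b = kinks_odd k b.
Proof.
  intros. unfold Wz_second_diff, kinks_odd, zind. rewrite !Wz_cases by lia.
  Wz_case_analysis b.
Qed.

Definition kink_sum_even (k : Z) (phi : Z -> R) : R :=
  6 * phi 0%Z - 4 * phi k - 4 * phi (- k)%Z + phi (2 * k)%Z + phi (- 2 * k)%Z.

Definition kink_sum_odd (k : Z) (phi : Z -> R) : R :=
  6 * phi 0%Z - 2 * phi k - 2 * phi (- k)%Z - 2 * phi (k + 1)%Z - 2 * phi (- k - 1)%Z
  + phi (2 * k + 1)%Z + phi (- 2 * k - 1)%Z.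

Lemma zsum_kinks_even K k phi : (0 <= k)%Z -> (2 * k <= Z.of_nat K)%Z ->
  zsum K (fun b => IZR (kinks_even k b) * phi b) = kink_sum_even k phi.
Proof.
  intros. unfold kinks_even, kink_sum_even.
  rewrite (zsum_ext _ _ (fun b => 6 * (IZR (zind 0 b) * phi b)
     + 1 * ((-4) * (IZR (zind k b) * phi b)
     + 1 * ((-4) * (IZR (zind (- k) b) * phi b)
     + 1 * (1 * (IZR (zind (2 * k) b) * phi b) + 1 * (IZR (zind (- 2 * k) b) * phi b)))))).
  2:{ intros b. rewrite !plus_IZR, !minus_IZR, !mult_IZR. ring. }
  rewrite !zsum_lin, !zsum_zind by lia. ring.
Qed.

Lemma zsum_kinks_odd K k phi : (0 <= k)%Z -> (2 * k + 1 <= Z.of_nat K)%Z ->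
  zsum K (fun b => IZR (kinks_odd k b) * phi b) = kink_sum_odd k phi.
Proof.
  intros. unfold kinks_odd, kink_sum_odd.
  rewrite (zsum_ext _ _ (fun b => 6 * (IZR (zind 0 b) * phi b)
     + 1 * ((-2) * (IZR (zind k b) * phi b)
     + 1 * ((-2) * (IZR (zind (- k) b) * phi b)
     + 1 * ((-2) * (IZR (zind (k + 1) b) * phi b)
     + 1 * ((-2) * (IZR (zind (- k - 1) b) * phi b)
     + 1 * (1 * (IZR (zind (2 * k + 1) b) * phi b)
          + 1 * (IZR (zind (- 2 * k - 1) b) * phi b)))))))).
  2:{ intros b. rewrite !plus_IZR, !minus_IZR, !mult_IZR. ring. }
  rewrite !zsum_lin, !zsum_zind by lia. ring.
Qed.

Lemma zsum_Wz_second_diff_nonneg K m phi :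
  (forall k, (0 <= k)%Z -> 0 <= kink_sum_even k phi) ->
  (forall k, (0 <= k)%Z -> 0 <= kink_sum_odd k phi) ->
  (0 <= m <= Z.of_nat K)%Z ->
  0 <= zsum K (fun b => IZR (Wz_second_diff m b) * phi b).
Proof.
  intros Heven Hodd Hm.
  destruct (Z.Even_or_Odd m) as [[k ->]|[k ->]].
  - rewrite (zsum_ext _ _ (fun b => IZR (kinks_even k b) * phi b))
      by (intros; rewrite Wz_second_diff_even by lia; reflexivity).
    rewrite zsum_kinks_even by lia. apply Heven. lia.
  - rewrite (zsum_ext _ _ (fun b => IZR (kinks_odd k b) * phi b))
      by (intros; rewrite Wz_second_diff_odd by lia; reflexivity).
    rewrite zsum_kinks_odd by lia. apply Hodd. lia.
Qed.

(** * Nonnegativity of the Fourier transform of W *)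

Lemma Wfun_interp (n : Z) (h : R) (a : Z) : (0 <= n)%Z -> IZR n <= 2 * h < IZR n + 1 ->
  Wfun h a = (IZR n + 1 - 2 * h) * IZR (Wz n a) + (2 * h - IZR n) * IZR (Wz (n + 1) a).
Proof.
  intros Hn Hh. unfold Wfun. rewrite Rabs_Zabs, !Wz_cases by lia.
  set (A := Z.abs a). assert (HA : (0 <= A)%Z) by (unfold A; lia). clearbody A.
  destruct (Z.le_gt_cases A n) as [H1|H1].
  - rewrite (proj2 (Z.leb_le A n)), (proj2 (Z.leb_le A (n + 1))) by lia.
    assert (IZR A <= IZR n) by (apply IZR_le; lia).
    destruct (Rle_dec (IZR A) (2 * h)) as [_|C]; [|lra].
    destruct (Z.le_gt_cases (2 * A) n) as [H2|H2].
    + rewrite (proj2 (Z.leb_le (2 * A) n)), (proj2 (Z.leb_le (2 * A) (n + 1))) by lia.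
      assert (2 * IZR A <= IZR n) by (rewrite <- mult_IZR; apply IZR_le; lia).
      rewrite !minus_IZR, !mult_IZR, !plus_IZR.
      unfold Rmax; destruct Rle_dec; lra.
    + rewrite (proj2 (Z.leb_gt (2 * A) n)) by lia.
      assert (IZR n + 1 <= 2 * IZR A)
        by (rewrite <- mult_IZR, <- plus_IZR; apply IZR_le; lia).
      destruct (Z.leb_spec (2 * A) (n + 1)).
      * assert (2 * IZR A = IZR n + 1)
          by (rewrite <- mult_IZR, <- plus_IZR; apply IZR_eq; lia).
        rewrite !minus_IZR, !mult_IZR, !plus_IZR.
        unfold Rmax; destruct Rle_dec; [|lra].
        replace (IZR n) with (2 * IZR A - 1) by lra. ring.
      * rewrite !minus_IZR, !plus_IZR.
        unfold Rmax; destruct Rle_dec; lra.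
  - rewrite (proj2 (Z.leb_gt A n)) by lia.
    assert (IZR n + 1 <= IZR A) by (rewrite <- plus_IZR; apply IZR_le; lia).
    destruct (Rle_dec (IZR A) (2 * h)) as [C|_]; [lra|].
    destruct (Z.leb_spec A (n + 1)).
    + assert (A = n + 1)%Z by lia. subst A.
      rewrite (proj2 (Z.leb_gt (2 * (n + 1)) (n + 1))) by lia.
      replace (n + 1 - (n + 1))%Z with 0%Z by ring. lra.
    + lra.
Qed.

Lemma Wfun_outside h a : 2 * h < IZR (Z.abs a) -> Wfun h a = 0.
Proof.
  intros Ha. unfold Wfun. rewrite Rabs_Zabs. destruct Rle_dec; [lra | reflexivity].
Qed.

Lemma Wbound_floor h : 0 <= h -> exists n : Z,
  (0 <= n)%Z /\ IZR n <= 2 * h < IZR n + 1 /\ Z.of_nat (Wbound h) = (n + 1)%Z.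
Proof.
  intros Hh. destruct (archimed (2 * h)) as [Hu1 Hu2].
  assert (Hu : (0 < up (2 * h))%Z) by (apply lt_IZR; lra).
  exists (up (2 * h) - 1)%Z. rewrite minus_IZR. repeat split; try lia; try lra.
  unfold Wbound. rewrite Nat2Z.inj_abs_nat. lia.
Qed.

Lemma zsum_Wfun_second_diff_nonneg h phi : 0 <= h ->
  (forall k, (0 <= k)%Z -> 0 <= kink_sum_even k phi) ->
  (forall k, (0 <= k)%Z -> 0 <= kink_sum_odd k phi) ->
  0 <= zsum (Wbound h) (fun b => Wfun h b * second_diff phi b).
Proof.
  intros Hh Heven Hodd.
  destruct (Wbound_floor h Hh) as (n & Hn0 & Hn & HK).
  assert (Hout : forall c, (n + 1 <= Z.abs c)%Z -> Wfun h c = 0).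
  { intros c Hc. apply Wfun_outside.
    assert (IZR (n + 1) <= IZR (Z.abs c)) by (apply IZR_le; lia). rewrite plus_IZR in *. lra. }
  rewrite zsum_second_diff_by_parts by (apply Hout; lia).
  rewrite (zsum_ext _ _ (fun b => (IZR n + 1 - 2 * h) * (IZR (Wz_second_diff n b) * phi b)
        + (2 * h - IZR n) * (IZR (Wz_second_diff (n + 1) b) * phi b))).
  2:{ intros b. unfold second_diff, Wz_second_diff. rewrite !(Wfun_interp n h) by assumption.
      rewrite !minus_IZR, !mult_IZR. ring. }
  rewrite zsum_lin.
  apply Rplus_le_le_0_compat; apply Rmult_le_pos; try lra;
    apply zsum_Wz_second_diff_nonneg; auto; lia.
Qed.

Definition cos_wave (beta : R) (b : Z) : R := cos (2 * PI * IZR b * beta).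

Lemma second_diff_cos_wave beta b :
  second_diff (cos_wave beta) b = (2 - 2 * cos (2 * PI * beta)) * cos_wave beta b.
Proof.
  unfold second_diff, cos_wave. rewrite minus_IZR, plus_IZR.
  replace (2 * PI * (IZR b - 1) * beta) with (2 * PI * IZR b * beta - 2 * PI * beta) by ring.
  replace (2 * PI * (IZR b + 1) * beta) with (2 * PI * IZR b * beta + 2 * PI * beta) by ring.
  rewrite cos_minus, cos_plus. ring.
Qed.

Lemma kink_sum_even_cos_wave beta k : 0 <= kink_sum_even k (cos_wave beta).
Proof.
  unfold kink_sum_even, cos_wave. set (x := 2 * PI * IZR k * beta).
  replace (2 * PI * IZR 0 * beta) with 0 by (simpl; ring).
  replace (2 * PI * IZR (- k) * beta) with (- x) by (unfold x; rewrite opp_IZR; ring).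
  replace (2 * PI * IZR (2 * k) * beta) with (2 * x) by (unfold x; rewrite mult_IZR; simpl; ring).
  replace (2 * PI * IZR (- 2 * k) * beta) with (- (2 * x))
    by (unfold x; rewrite mult_IZR; simpl; ring).
  rewrite !cos_neg, cos_0, cos_2a_cos. clearbody x.
  pose proof (Rle_0_sqr (1 - cos x)). unfold Rsqr in *. nra.
Qed.

Lemma kink_sum_odd_cos_wave beta k : 0 <= kink_sum_odd k (cos_wave beta).
Proof.
  unfold kink_sum_odd, cos_wave.
  set (x := 2 * PI * IZR k * beta). set (y := 2 * PI * IZR (k + 1) * beta).
  replace (2 * PI * IZR 0 * beta) with 0 by (simpl; ring).
  replace (2 * PI * IZR (- k) * beta) with (- x) by (unfold x; rewrite opp_IZR; ring).
  replace (2 * PI * IZR (- k - 1) * beta) with (- y)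
    by (unfold y; rewrite minus_IZR, opp_IZR, plus_IZR; ring).
  replace (2 * PI * IZR (2 * k + 1) * beta) with (x + y)
    by (unfold x, y; rewrite !plus_IZR, mult_IZR; simpl; ring).
  replace (2 * PI * IZR (- 2 * k - 1) * beta) with (- (x + y))
    by (unfold x, y; rewrite minus_IZR, plus_IZR, mult_IZR; simpl; ring).
  rewrite !cos_neg, cos_0, cos_plus. clearbody x y.
  pose proof (sin2_cos2 x). pose proof (sin2_cos2 y). unfold Rsqr in *.
  pose proof (COS_bound x). pose proof (COS_bound y).
  assert (0 <= (1 - cos x) * (1 - cos y)) by (apply Rmult_le_pos; lra).
  pose proof (Rle_0_sqr (cos x - cos y)). pose proof (Rle_0_sqr (sin x - sin y)).
  unfold Rsqr in *.
  match goal with |- 0 <= ?e =>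
    replace e with (4 * ((1 - cos x) * (1 - cos y))
      + (cos x - cos y) * (cos x - cos y) + (sin x - sin y) * (sin x - sin y)
      - (sin x * sin x + cos x * cos x - 1) - (sin y * sin y + cos y * cos y - 1)) by ring end.
  lra.
Qed.

Definition neg_square (b : Z) : R := - (IZR b * IZR b).

Lemma second_diff_neg_square b : second_diff neg_square b = 2.
Proof. unfold second_diff, neg_square. rewrite minus_IZR, plus_IZR. ring. Qed.

Lemma kink_sum_even_neg_square k : kink_sum_even k neg_square = 0.
Proof. unfold kink_sum_even, neg_square. rewrite !mult_IZR, !opp_IZR. simpl. ring. Qed.

Lemma kink_sum_odd_neg_square k : kink_sum_odd k neg_square = 2.
Proof.
  unfold kink_sum_odd, neg_square.
  rewrite !plus_IZR, !minus_IZR, !mult_IZR, !opp_IZR, ?plus_IZR. simpl. ring.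
Qed.

Lemma What_as_zsum h beta : What h beta = zsum (Wbound h) (fun a => Wfun h a * cos_wave beta a).
Proof. reflexivity. Qed.

Lemma What_nonneg h beta : 0 <= beta < 1 -> 0 <= What h beta.
Proof.
  intros Hb. rewrite What_as_zsum.
  destruct (Rlt_or_le h 0) as [Hh|Hh].
  { apply lsum_nonneg. intros k _. rewrite Wfun_outside; [lra|].
    pose proof (Rabs_pos (IZR (Z.of_nat k - Z.of_nat (Wbound h)))). rewrite Rabs_Zabs in *. lra. }
  destruct (Req_dec beta 0) as [->|Hb0].
  - pose proof (zsum_Wfun_second_diff_nonneg h neg_square Hh) as Hpos.
    rewrite (zsum_ext _ _ (fun b => 2 * (Wfun h b * cos_wave 0 b))) in Hpos.
    2:{ intros b. unfold cos_wave. rewrite second_diff_neg_square, Rmult_0_r, cos_0. ring. }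
    rewrite zsum_scal in Hpos.
    enough (0 <= 2 * zsum (Wbound h) (fun a => Wfun h a * cos_wave 0 a)) by lra.
    apply Hpos; intros k _;
      [rewrite kink_sum_even_neg_square | rewrite kink_sum_odd_neg_square]; lra.
  - pose proof (zsum_Wfun_second_diff_nonneg h (cos_wave beta) Hh
      (fun k _ => kink_sum_even_cos_wave beta k)
      (fun k _ => kink_sum_odd_cos_wave beta k)) as Hpos.
    rewrite (zsum_ext _ _ (fun b => (2 - 2 * cos (2 * PI * beta)) * (Wfun h b * cos_wave beta b)))
      in Hpos by (intros; rewrite second_diff_cos_wave; ring).
    rewrite zsum_scal in Hpos.
    assert (Hc : cos (2 * PI * beta) < 1).
    { replace (2 * PI * beta) with (2 * (PI * beta)) by ring. rewrite cos_2a_sin.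
      assert (0 < sin (PI * beta)) by (apply sin_gt_0; pose proof PI_RGT_0; nra). nra. }
    nra.
Qed.

Lemma Sf_opp f N x : Sf f N (- x) = Sf f N x.
Proof.
  unfold Sf. apply sum_eq. intros i _. f_equal.
  replace (2 * PI * INR i * - x) with (- (2 * PI * INR i * x)) by ring. apply cos_neg.
Qed.

Lemma inner_nonneg h f N q : (1 <= q)%nat ->
  (forall alpha, 0 <= alpha <= 1 -> 0 <= Sf f N alpha) -> 0 <= inner h f N q.
Proof.
  intros Hq Hf. apply lsum_nonneg. intros j Hj. apply in_seq in Hj.
  assert (Hq0 : 0 < INR q) by (apply lt_0_INR; lia).
  assert (Hjq : INR j < INR q) by (apply lt_INR; lia).
  assert (Hfrac : 0 <= INR j / INR q < 1).
  { split.
    - apply Rmult_le_pos; [apply pos_INR | left; apply Rinv_0_lt_compat; lra].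
    - apply (Rmult_lt_reg_r (INR q)); [lra|].
      unfold Rdiv. rewrite Rmult_assoc, Rinv_l by lra. lra. }
  apply Rmult_le_pos.
  - apply What_nonneg. lra.
  - rewrite Sf_opp. apply Hf. lra.
Qed.

Lemma in_range_nbelow Q q : In q (seq 1 (nbelow Q)) -> (1 <= q)%nat /\ INR q <= Q.
Proof.
  intros Hq. apply in_seq in Hq. unfold nbelow in Hq. split; [lia|].
  destruct (base_Int_part Q) as [HQ _].
  rewrite INR_IZR_INZ. apply Rle_trans with (IZR (Int_part Q)); [apply IZR_le; lia | lra].
Qed.

Lemma Tsum_abs_le c B h Q f N :
  (forall alpha, 0 <= alpha <= 1 -> 0 <= Sf f N alpha) ->
  (forall q, (1 <= q)%nat -> INR q <= Q -> Rabs (c q) <= B) ->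
  Rabs (Tsum c h Q f N) <= B * Tsum (fun _ => 1) h Q f N.
Proof.
  intros Hf Hc. unfold Tsum.
  eapply Rle_trans; [apply lsum_abs|]. rewrite <- lsum_scal.
  apply lsum_le. intros q Hq. apply in_range_nbelow in Hq as [Hq1 HqQ].
  assert (Hq0 : 0 < INR q) by (apply lt_0_INR; lia).
  pose proof (inner_nonneg h f N q Hq1 Hf) as HI.
  unfold Rdiv. rewrite !Rabs_mult, Rabs_inv, (Rabs_right (INR q)), (Rabs_right (inner _ _ _ _)) by lra.
  replace (B * (1 * / INR q * inner h f N q)) with (B * (/ INR q * inner h f N q)) by ring.
  rewrite Rmult_assoc. apply Rmult_le_compat_r.
  - apply Rmult_le_pos; [left; apply Rinv_0_lt_compat|]; lra.
  - now apply Hc.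
Qed.

Theorem lemma2 (h Q : nat -> R) (g : nat -> R) (f : nat -> nat -> R) :
  (* h -> infinity *)
  (forall M : R, exists N0 : nat, forall N : nat, (N0 <= N)%nat -> M <= h N) ->
  (* h = o(N) *)
  (forall eps : R, 0 < eps -> exists N0 : nat, forall N : nat, (N0 <= N)%nat ->
     Rabs (h N) <= eps * INR N) ->
  (* Q -> infinity *)
  (forall M : R, exists N0 : nat, forall N : nat, (N0 <= N)%nat -> M <= Q N) ->
  (* Q << N *)
  (exists C : R, exists N0 : nat, forall N : nat, (N0 <= N)%nat -> Q N <= C * INR N) ->
  (* g(q) <<_eps N^eps for q <= Q *)
  (forall eps : R, 0 < eps -> exists C : R, forall (N q : nat), (1 <= N)%nat ->
     (1 <= q)%nat -> INR q <= Q N -> Rabs (g q) <= C * Rpower (INR N) eps) ->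
  (* S_f >= 0 on [0,1] *)
  (forall (N : nat) (alpha : R), 0 <= alpha <= 1 -> 0 <= Sf (f N) N alpha) ->
  (* conclusion: LHS <<< RHS *)
  forall eps : R, 0 < eps -> exists C : R, exists N0 : nat, forall N : nat,
    (N0 <= N)%nat ->
    Rabs (Tsum g (h N) (Q N) (f N) N)
      <= C * Rpower (INR N) eps * Tsum (fun _ => 1) (h N) (Q N) (f N) N.
Proof.
  intros _ _ _ _ Hg Hf eps Heps.
  destruct (Hg eps Heps) as [C HC].
  exists C, 1%nat. intros N HN.
  apply Tsum_abs_le; [apply Hf|].
  intros q Hq HqQ. now apply HC.
Qed.
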